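(* Let $A\in\mathcal{S}$ with elements $a_0<a_1<\dots<a_{n-1}$ and greatest element $a_{\max}=a_{n-1}$. Then $A$ is decomposable if and only if there is an $i<n-1$ such that $o(a_i,a_{\max})=0$.
   Context: $\mathrm{Homeo}_+(I)$ acts on $I=[0,1]$ on the right, composition left to right, $f^g=g^{-1}fg$. Support $\mathrm{supt}(f)=\{t:tf\ne t\}$; extended support = interior of its closure; orbitals = components of the support, endpoints = transition points; a bump has exactly one orbital, positive if $tf>t$ there, else negative; the bump of $g$ on an orbital $J$ agrees with $g$ on $J$ and is the identity elsewhere. A marking assigns to each bump $a$ with support $(u,v)$ a point $s_a\in(u,v)$; feet of $a$: $(u,s_a)$ and $[t_a,v)$ with $t_a=s_aa$ ($a$ positive) or $s_aa^{-1}$ ($a$ negative). A marked function has finitely many bumps, each marked. A finite set of marked functions is fast if no bump occurs in two of its elements and distinct bumps have disjoint feet. A standard function is a marked function whose extended support is an interval, with all positive bumps right of all negative bumps, and #positive $-$ #negative bumps $\in\{0,1\}$. For standard $f,g$: $f\ll g$ iff extended supports disjoint with $f$'s to the left; $f\sqsubset g$ iff closure of extended support of $f$ lies in extended support of $g$; $f<g$ iff $f\ll g$ or $f\sqsubset g$. $f^\circ$: if $f$ has $>2$ orbitals, $f$ restricted to the union of its non-extreme orbitals (identity elsewhere, markers inherited); if $f$ has 1 or 2 orbitals and the left foot of its positive bump is $(r,s)$, a positive bump with support $(r,s)$. $(f,g)$ is a standard pair if $\{f,g\}$ is fast and either $f\ll g$ or ($f\sqsubset g$ and $(g^\circ,f)$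 is a standard pair). $\mathcal{S}$ = finite sets of standard functions, pairwise $<$-comparable, each pair $f<g$ a standard pair. For $f<g$ the oscillation $o(f,g)$ is the number of orbitals of $g$ containing a transition point of $f$. For $A,B,C\in\mathcal S$, $A=B+C$ means $A=B\cup C$ and $b\ll c$ for all $b\in B$, $c\in C$; $A$ is decomposable if $A=B+C$ for some nonempty $B,C$, and indecomposable otherwise. *)

From Stdlib Require Import Reals Lra List.
Open Scope R_scope.

(* Points of I = [0,1]. Homeo_+(I) acts on the right: t f := f t. *)
Definition inI (t : R) : Prop := 0 <= t <= 1.

(* Orientation-preserving homeomorphism of I: an increasing bijection of I onto
   itself (continuity is automatic).  Values outside I are irrelevant. *)
Definition homeo (f : R -> R) : Prop :=
  (forall x, inI x -> inI (f x)) /\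
  (forall x y, inI x -> inI y -> x < y -> f x < f y) /\
  (forall y, inI y -> exists x, inI x /\ f x = y).

Definition supt (f : R -> R) (t : R) : Prop := inI t /\ f t <> t.
Definition closure (S : R -> Prop) (x : R) : Prop :=
  forall e, 0 < e -> exists y, S y /\ Rabs (x - y) < e.
Definition interior (S : R -> Prop) (x : R) : Prop :=
  exists e, 0 < e /\ forall y, Rabs (x - y) < e -> S y.
Definition ext_supt (f : R -> R) : R -> Prop := interior (closure (supt f)).

Definition is_interval (S : R -> Prop) : Prop :=
  (exists x, S x) /\ forall x y z, S x -> S z -> x <= y <= z -> S y.

Definition orbital (f : R -> R) (u v : R) : Prop :=
  0 <= u /\ u < v /\ v <= 1 /\ f u = u /\ f v = v /\
  forall t, u < t < v -> f t <> t.

Definition pos_on (f : R -> R) (u v : R) : Prop := forall t, u < t < v -> f t > t.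
Definition neg_on (f : R -> R) (u v : R) : Prop := forall t, u < t < v -> f t < t.

(* A (candidate) marked function: the homeomorphism together with a marker
   assignment; the marker of the orbital (u,v) is [mk u]. *)
Record marked := Marked { fn : R -> R ; mk : R -> R }.

Definition dflt : marked := Marked (fun x => x) (fun x => x).

Definition count_orbitals (f : R -> R) (P : R -> R -> Prop) (n : nat) : Prop :=
  exists l : list (R * R), NoDup l /\ length l = n /\
    forall u v, In (u, v) l <-> (orbital f u v /\ P u v).

Definition is_marked (a : marked) : Prop :=
  homeo (fn a) /\
  (exists l : list (R * R), forall u v, orbital (fn a) u v -> In (u, v) l) /\
  (forall u v, orbital (fn a) u v -> u < mk a u < v).

Definition in_feet (a : marked) (u v x : R) : Prop :=
  let s := mk a u in
  (u < x < s) \/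
  (pos_on (fn a) u v /\ fn a s <= x < v) \/
  (neg_on (fn a) u v /\ exists t, inI t /\ fn a t = s /\ t <= x < v).

Definition same_bump (a : marked) (u v : R) (b : marked) (u' v' : R) : Prop :=
  u = u' /\ v = v' /\ forall t, u < t < v -> fn a t = fn b t.

Definition fast (L : list marked) : Prop :=
  (forall i j u v u' v', (i < length L)%nat -> (j < length L)%nat -> i <> j ->
     orbital (fn (nth i L dflt)) u v -> orbital (fn (nth j L dflt)) u' v' ->
     ~ same_bump (nth i L dflt) u v (nth j L dflt) u' v') /\
  (forall i j u v u' v', (i < length L)%nat -> (j < length L)%nat ->
     orbital (fn (nth i L dflt)) u v -> orbital (fn (nth j L dflt)) u' v' ->
     ~ same_bump (nth i L dflt) u v (nth j L dflt) u' v' ->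
     ~ exists x, in_feet (nth i L dflt) u v x /\ in_feet (nth j L dflt) u' v' x).

Definition standard (a : marked) : Prop :=
  is_marked a /\
  is_interval (ext_supt (fn a)) /\
  (forall u v u' v', orbital (fn a) u v -> pos_on (fn a) u v ->
     orbital (fn a) u' v' -> neg_on (fn a) u' v' -> v' <= u) /\
  exists np nn, count_orbitals (fn a) (pos_on (fn a)) np /\
    count_orbitals (fn a) (neg_on (fn a)) nn /\
    (np = nn \/ np = S nn).

Definition ll (f g : marked) : Prop :=
  forall x y, ext_supt (fn f) x -> ext_supt (fn g) y -> x < y.
Definition sq (f g : marked) : Prop :=
  forall x, closure (ext_supt (fn f)) x -> ext_supt (fn g) x.
Definition lt (f g : marked) : Prop := ll f g \/ sq f g.

Definition nonextreme (f : R -> R) (u v : R) : Prop :=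
  orbital f u v /\ (exists a b, orbital f a b /\ b <= u) /\
  (exists a b, orbital f a b /\ v <= a).

(* [circ f h] : h is (a valid choice of) f° *)
Definition circ (f h : marked) : Prop :=
  (exists n, count_orbitals (fn f) (fun _ _ => True) n /\ (n > 2)%nat /\
     (forall t, inI t ->
        fn h t = (fn f t) /\ (exists u v, nonextreme (fn f) u v /\ u < t < v)
        \/ fn h t = t /\ ~ (exists u v, nonextreme (fn f) u v /\ u < t < v)) /\
     (forall u v, orbital (fn h) u v -> mk h u = mk f u))
  \/
  ((count_orbitals (fn f) (fun _ _ => True) 1 \/
    count_orbitals (fn f) (fun _ _ => True) 2) /\
   exists u v, orbital (fn f) u v /\ pos_on (fn f) u v /\
     is_marked h /\
     (forall a b, orbital (fn h) a b <-> (a = u /\ b = mk f u)) /\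
     pos_on (fn h) u (mk f u)).

Inductive standard_pair : marked -> marked -> Prop :=
| sp_ll : forall f g, fast (f :: g :: nil) -> ll f g -> standard_pair f g
| sp_sq : forall f g, fast (f :: g :: nil) -> sq f g ->
    (forall h, circ g h -> standard_pair h f) -> standard_pair f g.

Definition inS (A : list marked) : Prop :=
  NoDup A /\
  (forall a, In a A -> standard a) /\
  (forall a b, In a A -> In b A -> a <> b -> lt a b \/ lt b a) /\
  (forall a b, In a A -> In b A -> lt a b -> standard_pair a b).

Definition osc (f g : marked) (n : nat) : Prop :=
  count_orbitals (fn g)
    (fun u v => exists a b, orbital (fn f) a b /\ ((u < a < v) \/ (u < b < v))) n.

Definition decomposable (A : list marked) : Prop :=
  exists B C : list marked, B <> nil /\ C <> nil /\ inS B /\ inS C /\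
    (forall x, In x A <-> In x B \/ In x C) /\
    (forall b c, In b B -> In c C -> ll b c).

(* If A = B + C, then a_max lies in C and every b in B satisfies b << a_max, which
   forces o(b, a_max) = 0.  Conversely, let a_i < a_max with o(a_i, a_max) = 0.
   The left end a of an orbital of a_i lies in the closure of the extended support
   of a_i, so if a_i were nested in a_max, some orbital (c, d) of a_max would have
   c <= a < d: c < a contradicts o(a_i, a_max) = 0, and c = a makes the left feet
   of two distinct bumps overlap, contradicting fastness.  Hence a_i << a_max, and
   A splits into the elements << a_max and the others, which are nested in a_max
   or equal to it. *)
From Stdlib Require Import Reals List.
From Stdlib Require Import Lra Lia Classical ClassicalDescription.
Open Scope R_scope.

Lemma last_nth_pred {T : Type} (l : list T) (d : T) :
  l <> nil -> last l d = nth (length l - 1) l d.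
Proof.
  induction l as [|a l IH]; intros Hl; [congruence|].
  destruct l as [|b l]; [reflexivity|].
  change (last (a :: b :: l) d) with (last (b :: l) d).
  rewrite IH by discriminate. simpl. now rewrite Nat.sub_0_r.
Qed.

Lemma lub_approx (E : R -> Prop) (u y : R) :
  is_lub E u -> y < u -> exists x, E x /\ y < x.
Proof.
  intros [_ Hleast] Hyu. apply NNPP. intros Hno.
  assert (u <= y); [|lra].
  apply Hleast. intros x Ex. apply Rnot_lt_le. intros Hyx. apply Hno. now exists x.
Qed.

Lemma finite_gap_above (xs : list R) (a d : R) :
  a < d -> exists m, a < m <= d /\ forall x, In x xs -> ~ (a < x < m).
Proof.
  intros Had. induction xs as [|x xs [m [Hm Hgap]]].
  - exists d. split; [lra | intros _ []].
  - destruct (Rlt_dec a x) as [Hax|Hax].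
    + exists (Rmin x m). pose proof (Rmin_l x m). pose proof (Rmin_r x m).
      split; [split; [apply Rmin_glb_lt|]; lra|].
      intros y [<-|Hy]; [lra|]. specialize (Hgap y Hy). lra.
    + exists m. split; [exact Hm|].
      intros y [<-|Hy]; [lra | now apply Hgap].
Qed.

Lemma homeo_fix0 (f : R -> R) : homeo f -> f 0 = 0.
Proof.
  intros [Hmaps [Hincr Honto]].
  destruct (Honto 0) as [x [Hx Hfx]]; [unfold inI; lra|].
  destruct (Req_dec x 0) as [->|Hx0]; [exact Hfx|].
  assert (f 0 < f x) by (apply Hincr; unfold inI in *; lra).
  assert (inI (f 0)) by (apply Hmaps; unfold inI; lra).
  unfold inI in *. lra.
Qed.

Lemma homeo_reflect (f : R -> R) : homeo f -> homeo (fun x => 1 - f (1 - x)).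
Proof.
  intros [Hmaps [Hincr Honto]]. split; [|split].
  - intros x Hx. assert (inI (f (1 - x))) by (apply Hmaps; unfold inI in *; lra).
    unfold inI in *. lra.
  - intros x y Hx Hy Hxy.
    assert (f (1 - y) < f (1 - x)) by (apply Hincr; unfold inI in *; lra). lra.
  - intros y Hy. destruct (Honto (1 - y)) as [x [Hx Hfx]]; [unfold inI in *; lra|].
    exists (1 - x). split; [unfold inI in *; lra|].
    replace (1 - (1 - x)) with x by ring. lra.
Qed.

(* The largest fixed point below t is the supremum of the fixed points in [0, t];
   it is fixed because f is increasing and onto. *)
Lemma homeo_left_fixed (f : R -> R) (t : R) : homeo f -> inI t -> f t <> t ->
  exists u, 0 <= u < t /\ f u = u /\ forall s, u < s <= t -> f s <> s.
Proof.
  intros Hf Ht Hft. pose proof (homeo_fix0 f Hf) as Hf0.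
  destruct Hf as [Hmaps [Hincr Honto]].
  set (E := fun x => 0 <= x <= t /\ f x = x).
  assert (HE0 : E 0) by (split; [unfold inI in Ht; lra | exact Hf0]).
  destruct (completeness E) as [u Hu].
  { exists t. intros x [Hx _]. lra. }
  { now exists 0. }
  assert (Hu0 : 0 <= u) by now apply Hu.
  assert (Hut : u <= t) by (apply Hu; intros x [Hx _]; lra).
  assert (HuI : inI u) by (unfold inI in *; lra).
  assert (Hfix_le : forall x, E x -> x <= u) by apply Hu.
  assert (Hfu : f u = u).
  { destruct (Rtotal_order (f u) u) as [Hlt|[Heq|Hgt]]; [exfalso| exact Heq | exfalso].
    - destruct (lub_approx E u (f u) Hu Hlt) as [x [[Hx Hfx] Hxfu]].
      pose proof (Hfix_le x (conj Hx Hfx)).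
      destruct (Req_dec x u) as [->|Hxu]; [lra|].
      assert (f x < f u) by (apply Hincr; unfold inI in *; lra). lra.
    - pose proof (Hmaps u HuI).
      destruct (Honto ((u + f u) / 2)) as [w [Hw Hfw]]; [unfold inI in *; lra|].
      assert (Hwu : w < u).
      { apply Rnot_le_lt. intros Huw. destruct (Req_dec u w) as [<-|]; [lra|].
        assert (f u < f w) by (apply Hincr; auto; lra). lra. }
      destruct (lub_approx E u w Hu Hwu) as [x [[Hx Hfx] Hwx]].
      pose proof (Hfix_le x (conj Hx Hfx)).
      assert (f w < f x) by (apply Hincr; unfold inI in *; lra). lra. }
  exists u. split; [split; [exact Hu0|]|split; [exact Hfu|]].
  - destruct (Req_dec u t) as [->|]; [contradiction | lra].
  - intros s Hs Hfs. assert (Hs_le : s <= u) by (apply Hfix_le; split; [lra | exact Hfs]).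
    lra.
Qed.

Lemma homeo_orbital_of_moved (f : R -> R) (t : R) : homeo f -> inI t -> f t <> t ->
  exists u v, orbital f u v /\ u < t < v.
Proof.
  intros Hf Ht Hft.
  destruct (homeo_left_fixed f t Hf Ht Hft) as [u [Hu [Hfu Hleft]]].
  assert (Hrt : 1 - f (1 - (1 - t)) <> 1 - t).
  { replace (1 - (1 - t)) with t by ring. intros H. apply Hft. lra. }
  destruct (homeo_left_fixed _ (1 - t) (homeo_reflect f Hf)) as [u' [Hu' [Hfu' Hright]]];
    [unfold inI in *; lra | exact Hrt |].
  exists u, (1 - u'). split; [|lra].
  repeat split; try lra.
  intros s Hs. destruct (Rle_dec s t); [apply Hleft; lra|].
  intros Hfs. apply (Hright (1 - s)); [lra|]. replace (1 - (1 - s)) with s by ring. lra.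
Qed.

Lemma closure_of_mem (S : R -> Prop) (x : R) : S x -> closure S x.
Proof.
  intros Hx e He. exists x. split; [exact Hx|].
  unfold Rminus. rewrite Rplus_opp_r, Rabs_R0. exact He.
Qed.

Lemma ext_supt_orbital (f : R -> R) (u v w : R) :
  orbital f u v -> u < w < v -> ext_supt f w.
Proof.
  intros (Hu & Huv & Hv & _ & _ & Hmoved) Hw.
  exists (Rmin (w - u) (v - w)).
  pose proof (Rmin_l (w - u) (v - w)). pose proof (Rmin_r (w - u) (v - w)).
  split; [apply Rmin_glb_lt; lra|].
  intros y Hy. apply Rabs_def2 in Hy.
  apply closure_of_mem. split; [unfold inI; lra | apply Hmoved; lra].
Qed.

Lemma closure_ext_supt_orbital_left (f : R -> R) (a b : R) :
  orbital f a b -> closure (ext_supt f) a.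
Proof.
  intros Hab. pose proof Hab as (_ & Hlt & _).
  intros e He. exists (a + Rmin e (b - a) / 2).
  pose proof (Rmin_l e (b - a)). pose proof (Rmin_r e (b - a)).
  assert (0 < Rmin e (b - a)) by (apply Rmin_glb_lt; lra).
  split; [apply (ext_supt_orbital f a b); [exact Hab | lra]|].
  rewrite Rabs_left by lra. lra.
Qed.

Lemma orbitals_overlap_ext_supt (f g : R -> R) (a b u v : R) :
  orbital f a b -> orbital g u v -> (u < a < v \/ u < b < v) ->
  exists w, ext_supt f w /\ ext_supt g w.
Proof.
  intros Hab Huv Hmeet.
  pose proof Hab as (_ & Hab' & _). pose proof Huv as (_ & Huv' & _).
  pose proof (Rmax_l a u). pose proof (Rmax_r a u).
  pose proof (Rmin_l b v). pose proof (Rmin_r b v).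
  assert (Rmax a u < Rmin b v) by (apply Rmax_lub_lt; apply Rmin_glb_lt; lra).
  exists ((Rmax a u + Rmin b v) / 2). split.
  - apply (ext_supt_orbital f a b); [exact Hab | lra].
  - apply (ext_supt_orbital g u v); [exact Huv | lra].
Qed.

(* Just right of a there is an interval (a, m) containing none of the finitely
   many left ends of orbitals of g; a moved point in it lies in an orbital
   starting at or before a. *)
Lemma marked_orbital_at (g : marked) (a : R) : is_marked g -> ext_supt (fn g) a ->
  exists c d, orbital (fn g) c d /\ c <= a < d.
Proof.
  intros [Hg [[L HL] _]] [e [He Hball]].
  destruct (finite_gap_above (map fst L) a (a + e)) as [m [Hm Hgap]]; [lra|].
  assert (Hmid : Rabs (a - (a + m) / 2) < e) by (rewrite Rabs_left; lra).
  destruct (Hball _ Hmid ((m - a) / 2)) as [y [[Hy Hgy] Hclose]]; [lra|].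
  apply Rabs_def2 in Hclose.
  destruct (homeo_orbital_of_moved (fn g) y Hg Hy Hgy) as [c [d [Hcd Hcyd]]].
  exists c, d. split; [exact Hcd|].
  assert (~ (a < c < m)); [|lra].
  apply Hgap. apply (in_map fst L (c, d)). now apply HL.
Qed.

Lemma standard_ext_supt (a : marked) : standard a -> exists x, ext_supt (fn a) x.
Proof. intros (_ & [Hne _] & _). exact Hne. Qed.

Lemma standard_orbital (a : marked) : standard a -> exists u v, orbital (fn a) u v.
Proof.
  intros Ha. pose proof Ha as [[Hh _] _].
  destruct (standard_ext_supt a Ha) as [x [e [He Hball]]].
  assert (Hx : Rabs (x - x) < e) by (unfold Rminus; rewrite Rplus_opp_r, Rabs_R0; exact He).
  destruct (Hball x Hx 1) as [t [[Ht Hft] _]]; [lra|].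
  destruct (homeo_orbital_of_moved _ t Hh Ht Hft) as [u [v [Huv _]]]. eauto.
Qed.

Lemma ll_irrefl (a : marked) : standard a -> ~ ll a a.
Proof.
  intros Ha Hll. destruct (standard_ext_supt a Ha) as [x Hx].
  specialize (Hll x x Hx Hx). lra.
Qed.

Lemma ll_lt_asym (a c : marked) : standard a -> standard c -> ll a c -> ~ lt c a.
Proof.
  intros Ha Hc Hac [Hca|Hca];
    destruct (standard_ext_supt c Hc) as [x Hx].
  - destruct (standard_ext_supt a Ha) as [y Hy].
    specialize (Hac y x Hy Hx). specialize (Hca x y Hx Hy). lra.
  - specialize (Hac x x (Hca x (closure_of_mem _ _ Hx)) Hx). lra.
Qed.

Lemma ll_sq_trans (a b c : marked) : ll b a -> sq c a -> ll b c.
Proof. intros Hba Hca x y Hx Hy. apply Hba; [exact Hx|]. now apply Hca, closure_of_mem. Qed.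

Lemma ll_osc0 (f g : marked) : ll f g -> osc f g 0.
Proof.
  intros Hfg. exists nil. split; [constructor|]. split; [reflexivity|].
  intros u v. split; [intros []|]. intros [Huv [a [b [Hab Hmeet]]]].
  destruct (orbitals_overlap_ext_supt _ _ a b u v Hab Huv Hmeet) as [w [Hf Hg]].
  specialize (Hfg w w Hf Hg). lra.
Qed.

Lemma osc0_not_straddled (f g : marked) (a b c d : R) : osc f g 0 ->
  orbital (fn f) a b -> orbital (fn g) c d -> ~ (c < a < d).
Proof.
  intros [l [_ [Hlen Hl]]] Hab Hcd Hcad.
  destruct l; [|discriminate].
  apply (proj2 (Hl c d)). split; [exact Hcd|]. exists a, b. split; [exact Hab | now left].
Qed.

Lemma fast_left_ends_differ (f g : marked) (a b d : R) :
  is_marked f -> is_marked g -> fast (f :: g :: nil) ->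
  orbital (fn f) a b -> orbital (fn g) a d -> False.
Proof.
  intros (_ & _ & Hmf) (_ & _ & Hmg) [Hbumps Hfeet] Hab Had.
  pose proof (Hmf a b Hab). pose proof (Hmg a d Had).
  assert (Hdiff : ~ same_bump f a b g a d) by (apply (Hbumps 0%nat 1%nat); simpl; auto).
  apply (Hfeet 0%nat 1%nat a b a d); simpl; auto.
  pose proof (Rmin_l (mk f a) (mk g a)). pose proof (Rmin_r (mk f a) (mk g a)).
  assert (a < Rmin (mk f a) (mk g a)) by (apply Rmin_glb_lt; lra).
  exists ((a + Rmin (mk f a) (mk g a)) / 2). split; left; lra.
Qed.

Lemma osc0_not_sq (f g : marked) : standard f -> standard g -> fast (f :: g :: nil) ->
  osc f g 0 -> ~ sq f g.
Proof.
  intros Hf Hg Hfast Hosc Hsq.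
  destruct (standard_orbital f Hf) as [a [b Hab]].
  pose proof (Hsq a (closure_ext_supt_orbital_left _ a b Hab)) as Ha.
  destruct (marked_orbital_at g a (proj1 Hg) Ha) as [c [d [Hcd [Hca Had]]]].
  destruct Hca as [Hca | ->].
  - exact (osc0_not_straddled f g a b c d Hosc Hab Hcd (conj Hca Had)).
  - exact (fast_left_ends_differ f g a b d (proj1 Hf) (proj1 Hg) Hfast Hab Hcd).
Qed.

Lemma inS_incl (A B : list marked) : inS A -> NoDup B -> incl B A -> inS B.
Proof.
  intros (_ & Hstd & Hcmp & Hpair) HB HBA. split; [exact HB|]. split; [|split].
  - intros a Ha. now apply Hstd, HBA.
  - intros a b Ha Hb. apply Hcmp; now apply HBA.
  - intros a b Ha Hb. apply Hpair; now apply HBA.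
Qed.

Section Chain.

Variable A : list marked.
Hypothesis HA : inS A.
Hypothesis HA_nil : A <> nil.
Hypothesis HA_chain : forall i j, (i < j)%nat -> (j < length A)%nat ->
  lt (nth i A dflt) (nth j A dflt).

Let amax := last A dflt.
Let In_standard : forall x, In x A -> standard x := proj1 (proj2 HA).

Lemma In_amax : In amax A.
Proof.
  unfold amax. rewrite last_nth_pred by exact HA_nil. apply nth_In.
  destruct A; [congruence | simpl; lia].
Qed.

Lemma lt_amax (x : marked) : In x A -> x <> amax -> lt x amax.
Proof.
  intros Hx Hxmax. destruct (In_nth A x dflt Hx) as [i [Hi <-]].
  unfold amax in *. rewrite last_nth_pred in * by exact HA_nil.
  apply HA_chain; [|lia].
  destruct (Nat.eq_dec i (length A - 1)) as [->|]; [contradiction | lia].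
Qed.

Lemma decomposable_ll_amax : decomposable A -> exists b, In b A /\ ll b amax.
Proof.
  intros (B & C & HB & HC & _ & _ & HBC & Hll).
  assert (HBA : forall b, In b B -> In b A) by (intros b Hb; apply HBC; now left).
  assert (HCA : forall c, In c C -> In c A) by (intros c Hc; apply HBC; now right).
  destruct B as [|b B]; [congruence|]. destruct C as [|c C]; [congruence|].
  assert (HmaxC : In amax (c :: C)).
  { destruct (proj1 (HBC amax) In_amax) as [HmaxB|]; [exfalso|assumption].
    pose proof (Hll amax c HmaxB (or_introl eq_refl)) as Hmax_c.
    assert (Hc : In c A) by (apply HCA; now left).
    destruct (classic (c = amax)) as [->|Hcmax].
    - exact (ll_irrefl amax (In_standard _ In_amax) Hmax_c).
    - exact (ll_lt_asym amax c (In_standard _ In_amax) (In_standard _ Hc) Hmax_c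
               (lt_amax c Hc Hcmax)). }
  exists b. split; [apply HBA; now left | apply Hll; [now left | exact HmaxC]].
Qed.

Lemma ll_amax_decomposable (b : marked) : In b A -> ll b amax -> decomposable A.
Proof.
  intros Hb Hbmax.
  set (p := fun x => if excluded_middle_informative (ll x amax) then true else false).
  assert (Hp : forall x, p x = true <-> ll x amax)
    by (intros x; unfold p; destruct excluded_middle_informative; split; easy).
  exists (filter p A), (filter (fun x => negb (p x)) A).
  split; [|split; [|split; [|split; [|split]]]].
  - intros Hnil. assert (Hin : In b (filter p A)) by (apply filter_In; now rewrite Hp).
    now rewrite Hnil in Hin.
  - intros Hnil. assert (Hin : In amax (filter (fun x => negb (p x)) A)).
    { apply filter_In. split; [exact In_amax|].
      destruct (p amax) eqn:Hpmax; [|reflexivity].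
      exfalso. apply Hp in Hpmax. exact (ll_irrefl amax (In_standard _ In_amax) Hpmax). }
    now rewrite Hnil in Hin.
  - apply (inS_incl A); [exact HA | apply NoDup_filter, HA | apply incl_filter].
  - apply (inS_incl A); [exact HA | apply NoDup_filter, HA | apply incl_filter].
  - intros x. rewrite !filter_In. destruct (p x); simpl; tauto.
  - intros x c Hx Hc. apply filter_In in Hx as [_ Hx]. apply filter_In in Hc as [HcA Hc].
    apply Hp in Hx.
    destruct (classic (c = amax)) as [->|Hcmax]; [exact Hx|].
    destruct (lt_amax c HcA Hcmax) as [Hcll|Hcsq].
    + apply Hp in Hcll. now rewrite Hcll in Hc.
    + exact (ll_sq_trans amax x c Hx Hcsq).
Qed.

Lemma ll_amax_index :
  (exists b, In b A /\ ll b amax) <->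
  exists i, (i < length A - 1)%nat /\ ll (nth i A dflt) amax.
Proof.
  split.
  - intros [b [Hb Hbmax]]. destruct (In_nth A b dflt Hb) as [i [Hi <-]].
    exists i. split; [|exact Hbmax].
    destruct (Nat.eq_dec i (length A - 1)) as [Hlast|]; [exfalso|lia].
    unfold amax in Hbmax. rewrite last_nth_pred, <- Hlast in Hbmax by exact HA_nil.
    exact (ll_irrefl _ (In_standard _ Hb) Hbmax).
  - intros [i [Hi Himax]]. exists (nth i A dflt). split; [apply nth_In; lia | exact Himax].
Qed.

Lemma osc0_amax_iff_ll (i : nat) : (i < length A - 1)%nat ->
  osc (nth i A dflt) amax 0 <-> ll (nth i A dflt) amax.
Proof.
  intros Hi. split; [|apply ll_osc0].
  intros Hosc.
  assert (Hai : In (nth i A dflt) A) by (apply nth_In; lia).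
  assert (Hlt : lt (nth i A dflt) amax)
    by (unfold amax; rewrite last_nth_pred by exact HA_nil; apply HA_chain; lia).
  destruct Hlt as [Hll|Hsq]; [exact Hll | exfalso].
  assert (Hpair := proj2 (proj2 (proj2 HA)) _ amax Hai In_amax (or_intror Hsq)).
  assert (Hfast : fast (nth i A dflt :: amax :: nil)) by (inversion Hpair; assumption).
  exact (osc0_not_sq _ amax (In_standard _ Hai) (In_standard _ In_amax) Hfast Hosc Hsq).
Qed.

End Chain.

Theorem lemma4p4 (A : list marked) :
  inS A ->
  A <> nil ->
  (forall i j, (i < j)%nat -> (j < length A)%nat ->
     lt (nth i A dflt) (nth j A dflt)) ->
  (decomposable A <->
   exists i, (i < length A - 1)%nat /\ osc (nth i A dflt) (last A dflt) 0).
Proof.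
  intros HA HA_nil HA_chain.
  transitivity (exists b, In b A /\ ll b (last A dflt)).
  { split; [apply decomposable_ll_amax; assumption|].
    intros [b [Hb Hbmax]]. exact (ll_amax_decomposable A HA HA_nil HA_chain b Hb Hbmax). }
  rewrite (ll_amax_index A HA HA_nil).
  split; intros [i [Hi Hrel]]; exists i; split; try exact Hi;
    now apply (osc0_amax_iff_ll A HA HA_nil HA_chain).
Qed.
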